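(* Let $G$ be a $(P_5,\text{chair})$-free graph and let $C=v_1v_2v_3v_4v_5v_1$ be an induced $C_5$ in $G$. Then for every $1\le i\le 5$, every vertex in $S_4(i)\cup S_5$ is either complete or anticomplete to each connected component of $G[S^2_3(i)]$.
   Context: All graphs are finite and simple; $P_5$ is the path on 5 vertices; the chair is a $P_4$ plus a vertex adjacent to exactly one of the two middle vertices of the $P_4$; ''$H$-free'' means no induced subgraph isomorphic to $H$. Indices modulo 5; for $v\notin V(C)$ let $N_C(v)=N(v)\cap V(C)$. $S^2_3(i)=\{v\notin V(C): N_C(v)=\{v_{i-2},v_i,v_{i+2}\}\}$, $S_4(i)=\{v\notin V(C): N_C(v)=\{v_{i-2},v_{i-1},v_{i+1},v_{i+2}\}\}$, $S_5=\{v\notin V(C): N_C(v)=V(C)\}$. A vertex is complete (anticomplete) to a set if it is adjacent (nonadjacent) to every vertex of the set. *)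

From mathcomp Require Import all_boot.
Set Implicit Arguments. Unset Strict Implicit. Unset Printing Implicit Defensive.

Definition simple_graph (T : finType) (e : rel T) : Prop :=
  symmetric e /\ irreflexive e.

Definition induced_free (T : finType) (e : rel T) (n : nat) (h : rel 'I_n) : Prop :=
  ~ exists f : 'I_n -> T, injective f /\ forall a b, e (f a) (f b) = h a b.

Definition P5_rel : rel 'I_5 :=
  fun a b => (a.+1 == b :> nat) || (b.+1 == a :> nat).

Definition chair_edge (a b : nat) : bool :=
  ((a == 0) && (b == 1)) || ((a == 1) && (b == 2)) ||
  ((a == 2) && (b == 3)) || ((a == 1) && (b == 4)).
Definition chair_rel : rel 'I_5 := fun a b => chair_edge a b || chair_edge b a.

(* indices modulo 5 (vertices of C numbered 0..4) *)
Definition shift (i : 'I_5) (k : nat) : 'I_5 := Ordinal (ltn_pmod (i + k) (isT : 0 < 5)).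

Definition induced_C5 (T : finType) (e : rel T) (v : 'I_5 -> T) : Prop :=
  injective v /\ forall a b : 'I_5, e (v a) (v b) = (b == shift a 1) || (a == shift b 1).

Definition VC (T : finType) (v : 'I_5 -> T) : {set T} := [set v j | j : 'I_5].

Definition NC (T : finType) (e : rel T) (v : 'I_5 -> T) (u : T) : {set T} :=
  [set w in VC v | e u w].

(* S^2_3(i) = {u notin C : N_C(u) = {v_{i-2}, v_i, v_{i+2}}} *)
Definition S23 (T : finType) (e : rel T) (v : 'I_5 -> T) (i : 'I_5) : {set T} :=
  [set u | (u \notin VC v) && (NC e v u == [set v (shift i 3); v i; v (shift i 2)])].

(* S_4(i) = {u notin C : N_C(u) = {v_{i-2}, v_{i-1}, v_{i+1}, v_{i+2}}} *)
Definition S4 (T : finType) (e : rel T) (v : 'I_5 -> T) (i : 'I_5) : {set T} :=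
  [set u | (u \notin VC v) &&
     (NC e v u == [set v (shift i 3); v (shift i 4); v (shift i 1); v (shift i 2)])].

Definition S5 (T : finType) (e : rel T) (v : 'I_5 -> T) : {set T} :=
  [set u | (u \notin VC v) && (NC e v u == VC v)].

Definition induced_rel (T : finType) (e : rel T) (S : {set T}) : rel T :=
  fun a b => [&& e a b, a \in S & b \in S].

Definition component (T : finType) (e : rel T) (S : {set T}) (x : T) : {set T} :=
  [set y | connect (induced_rel e S) x y].

Definition complete_to (T : finType) (e : rel T) (u : T) (A : {set T}) : Prop :=
  forall y, y \in A -> e u y.
Definition anticomplete_to (T : finType) (e : rel T) (u : T) (A : {set T}) : Prop :=
  forall y, y \in A -> ~~ e u y.

From mathcomp Require Import all_boot.

(* Let a, b in S^2_3(i) be adjacent with u ~ a and u !~ b, and write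
   w = v_{i+1}, w' = v_{i-1}.  Then u is adjacent to w and w', while a and b
   are not, and w !~ w'; so w - u - a - b with the pendant w' at u is an
   induced chair.  Hence adjacency to u is constant along the edges of
   G[S^2_3(i)], and therefore on each of its components. *)

Section ChairFreeAroundC5.

Variables (T : finType) (e : rel T) (v : 'I_5 -> T).
Hypotheses (e_sym : symmetric e) (e_irr : irreflexive e).
Hypothesis chair_free : induced_free e chair_rel.
Hypothesis C_ind : induced_C5 e v.

(* Vertices 0 and 4 of the chair are twins, so theirs is the only
   distinctness that does not follow from the adjacency pattern.  The default
   of [nth] supplies [f 4 = a4]. *)
Lemma no_induced_chair (a0 a1 a2 a3 a4 : T) : a0 != a4 ->
  [&& e a0 a1, e a1 a2, e a2 a3 & e a1 a4] ->
  ~~ [|| e a0 a2, e a0 a3, e a0 a4, e a1 a3, e a2 a4 | e a3 a4] -> False.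
Proof.
move=> a04 /and4P[e01 e12 e23 e14].
rewrite !negb_or => /and5P[/negbTE n02 /negbTE n03 /negbTE n04
                          /negbTE n13 /andP[/negbTE n24 /negbTE n34]].
pose f (k : 'I_5) := nth a4 [:: a0; a1; a2; a3] k.
have f_adj p q : e (f p) (f q) = chair_rel p q.
  case: p q => [[|[|[|[|[|?]]]]] ?] // [[|[|[|[|[|?]]]]] ?] //;
    by rewrite /f /chair_rel /chair_edge /= ?e_irr // e_sym.
apply: chair_free; exists f; split=> // p q fpq; apply: val_inj.
have same_row r : chair_rel p r = chair_rel q r by rewrite -!f_adj fpq.
move: fpq (same_row (@Ordinal 5 0 isT)) (same_row (@Ordinal 5 1 isT))
  (same_row (@Ordinal 5 2 isT)) (same_row (@Ordinal 5 3 isT)); clear same_row.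
case: p q => [[|[|[|[|[|?]]]]] ?] // [[|[|[|[|[|?]]]]] ?] //=;
  rewrite /f /chair_rel /chair_edge //= => /eqP.
all: by rewrite ?(eq_sym a4) (negbTE a04).
Qed.

Lemma mem_VC (j : 'I_5) : v j \in VC v.
Proof. exact: imset_f. Qed.

Lemma mem_NC (t : T) (j : 'I_5) : (v j \in NC e v t) = e t (v j).
Proof. by rewrite inE mem_VC. Qed.

Lemma C5_next_prev_neq (i : 'I_5) : v (shift i 1) != v (shift i 4).
Proof. by rewrite (inj_eq C_ind.1); case: i => [[|[|[|[|[|?]]]]] ?]. Qed.

Lemma C5_next_prev_nonadj (i : 'I_5) : ~~ e (v (shift i 1)) (v (shift i 4)).
Proof. by rewrite C_ind.2; case: i => [[|[|[|[|[|?]]]]] ?]. Qed.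

Lemma S23_nonadj_next_prev {i : 'I_5} {t : T} : t \in S23 e v i ->
  ~~ e t (v (shift i 1)) && ~~ e t (v (shift i 4)).
Proof.
rewrite inE => /andP[_ /eqP NCt]; rewrite -!mem_NC {}NCt !inE !(inj_eq C_ind.1).
by case: i => [[|[|[|[|[|?]]]]] ?].
Qed.

Lemma S45_adj_next_prev {i : 'I_5} {u : T} : u \in S4 e v i :|: S5 e v ->
  e u (v (shift i 1)) && e u (v (shift i 4)).
Proof.
case/setUP=> /[!inE] /andP[_ /eqP NCu]; rewrite -!mem_NC {}NCu.
  by rewrite !inE !eqxx !orbT.
by rewrite !mem_VC.
Qed.

Lemma S45_S23_edge_no_split {i : 'I_5} {u a b : T} :
  u \in S4 e v i :|: S5 e v -> a \in S23 e v i -> b \in S23 e v i ->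
  e a b -> e u a -> ~~ e u b -> False.
Proof.
move=> uS45 aS bS eab ua nub.
have /andP[uw uw'] := S45_adj_next_prev uS45.
have /andP[aw aw'] := S23_nonadj_next_prev aS.
have /andP[bw bw'] := S23_nonadj_next_prev bS.
apply: (@no_induced_chair _ u a b _ (C5_next_prev_neq i)).
  by rewrite e_sym uw ua eab uw'.
by rewrite !negb_or C5_next_prev_nonadj nub ![e (v _) _]e_sym aw bw aw' bw'.
Qed.

Lemma S45_adj_S23_edge {i : 'I_5} {u a b : T} :
  u \in S4 e v i :|: S5 e v -> a \in S23 e v i -> b \in S23 e v i ->
  e a b -> e u a = e u b.
Proof.
move=> uS45 aS bS eab.
apply/idP/idP=> [ua | ub]; apply/negPn/negP.
  exact: S45_S23_edge_no_split uS45 aS bS eab ua.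
by apply: (S45_S23_edge_no_split uS45 bS aS _ ub); rewrite e_sym.
Qed.

End ChairFreeAroundC5.

Theorem mainTheorem6 (T : finType) (e : rel T) (v : 'I_5 -> T) :
  simple_graph e ->
  induced_free e P5_rel ->
  induced_free e chair_rel ->
  induced_C5 e v ->
  forall (i : 'I_5) (u : T), u \in S4 e v i :|: S5 e v ->
  forall x : T, x \in S23 e v i ->
    complete_to e u (component e (S23 e v i) x) \/
    anticomplete_to e u (component e (S23 e v i) x).
Proof.
move=> [e_sym e_irr] _ chair_free C_ind i u uS45 x _.
have adj_u_closed : closed (induced_rel e (S23 e v i)) (e u).
  move=> a b /and3P[eab aS bS].
  exact: (S45_adj_S23_edge _ _ _ e_sym e_irr chair_free C_ind uS45 aS bS eab).
have adj_u_const y : y \in component e (S23 e v i) x -> e u x = e u y.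
  by rewrite inE => /(closed_connect adj_u_closed).
by case ux: (e u x); [left | right] => y /adj_u_const <-; rewrite ux.
Qed.
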